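(* Let $p,r$ be positive integers, $q=p+r$, and let $\Phi^*:V^*_{pq}(\mathbb{H})\to\mathbb{C}^{r\times 2p}$ be the map $$\Phi^*(Q)=\begin{pmatrix}U & -V\end{pmatrix}\begin{pmatrix}Z-X & Y-W\\ \bar Y+\bar W & \bar Z+\bar X\end{pmatrix}^{-1},$$ where $Q=(Q_0;Q_1;Q_2)$ with $Q_0=Z+Wj$, $Q_1=X+Yj$, $Q_2=U+Vj$ ($Z,W,X,Y\in\mathbb{C}^{p\times p}$, $U,V\in\mathbb{C}^{r\times p}$). Then the complex valued components of $\Phi^*$ constitute an orthogonal harmonic family of $\mathbf{GL}_p(\mathbb{H})$-invariant functions on $V^*_{pq}(\mathbb{H})$, equipped with the Euclidean metric.
   Context: $\mathbb{H}=\{z+wj: z,w\in\mathbb{C}\}$. $U^*_{pq}(\mathbb{H})=\{Q\in\mathbb{H}^{(p+q)\times p}: Q^*Q \text{ invertible}\}$, with $Q_0,Q_1$ having $p$ rows and $Q_2$ having $r$ rows, and $V^*_{pq}(\mathbb{H})=\{Q\in U^*_{pq}(\mathbb{H}): \det\begin{pmatrix}Z-X & Y-W\\ \bar Y+\bar W & \bar Z+\bar X\end{pmatrix}\neq0\}$. $\mathbf{GL}_p(\mathbb{H})$ acts by right multiplication. The Euclidean metric is $\langle X,Y\rangle=\mathfrak{Re}\,\mathrm{trace}(X^*Y)$. For a Riemannian manifold $(M,g)$ and complex functions $\phi,\psi$, $\tau(\phi)$ is the Laplace–Beltrami operator (extended complex-linearly) and $\kappa(\phi,\psi)=g(\mathrm{grad}\,\phi,\mathrm{grad}\,\psi)$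 with $g$ extended complex-bilinearly. A set $\Omega$ of complex functions is an orthogonal harmonic family if $\tau(\phi)=0$ and $\kappa(\phi,\psi)=0$ for all $\phi,\psi\in\Omega$. *)

From mathcomp Require Import all_boot all_algebra.
From mathcomp Require Import all_classical all_reals all_analysis.
From mathcomp.real_closed Require Import complex.
Import GRing.Theory Num.Theory.
Local Open Scope ring_scope.
Local Open Scope complex_scope.

Set Implicit Arguments.
Unset Strict Implicit.
Unset Printing Implicit Defensive.

(* Quaternionic matrices: an m x n matrix over H = {z + w j} is stored  *)
(* as a pair (A, B) of complex m x n matrices, meaning A + B j.         *)
Definition hmat (R : realType) (m n : nat) : Type :=
  ('M[R[i]]_(m, n) * 'M[R[i]]_(m, n))%type.

Definition cconj (R : realType) (m n : nat) (A : 'M[R[i]]_(m, n)) :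
  'M[R[i]]_(m, n) := map_mx (@conjc R) A.

(* (A + B j)(C + D j) = (A C - B conj(D)) + (A D + B conj(C)) j,
   using j c = conj(c) j and j^2 = -1. *)
Definition hmul (R : realType) (m n k : nat)
  (P : hmat R m n) (Q : hmat R n k) : hmat R m k :=
  (P.1 *m Q.1 - P.2 *m cconj Q.2, P.1 *m Q.2 + P.2 *m cconj Q.1).

(* quaternionic conjugate transpose: (A + B j)^* = A^* - B^T j *)
Definition hadj (R : realType) (m n : nat) (P : hmat R m n) : hmat R n m :=
  ((cconj P.1)^T, - (P.2)^T).

Definition hone (R : realType) (n : nat) : hmat R n n := (1%:M, 0).

Definition hinvertible (R : realType) (n : nat) (g : hmat R n n) : Prop :=
  exists h : hmat R n n, hmul g h = hone R n /\ hmul h g = hone R n.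

(* The block decomposition Q = (Q0; Q1; Q2) for Q in H^{(p+q) x p},    *)
(* q = p + r, Q0 = Z + W j, Q1 = X + Y j, Q2 = U + V j.                 *)
Section Blocks.
Variables (R : realType) (p r : nat).
Local Notation HM := (hmat R (p + (p + r)) p).

Definition blkZ (Q : HM) : 'M[R[i]]_p := usubmx Q.1.
Definition blkW (Q : HM) : 'M[R[i]]_p := usubmx Q.2.
Definition blkX (Q : HM) : 'M[R[i]]_p := usubmx (dsubmx Q.1).
Definition blkY (Q : HM) : 'M[R[i]]_p := usubmx (dsubmx Q.2).
Definition blkU (Q : HM) : 'M[R[i]]_(r, p) := dsubmx (dsubmx Q.1).
Definition blkV (Q : HM) : 'M[R[i]]_(r, p) := dsubmx (dsubmx Q.2).

Definition Mstar (Q : HM) : 'M[R[i]]_(p + p) :=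
  block_mx (blkZ Q - blkX Q) (blkY Q - blkW Q)
           (cconj (blkY Q) + cconj (blkW Q)) (cconj (blkZ Q) + cconj (blkX Q)).

Definition in_Ustar (Q : HM) : Prop := hinvertible (hmul (hadj Q) Q).

Definition in_Vstar (Q : HM) : Prop := in_Ustar Q /\ \det (Mstar Q) != 0.

Definition Phistar (Q : HM) : 'M[R[i]]_(r, p + p) :=
  row_mx (blkU Q) (- blkV Q) *m invmx (Mstar Q).
End Blocks.

(* Euclidean calculus on H^{m x n} with <X,Y> = Re trace(X^* Y).        *)
(* For entry (a,b), the real coordinates Re z, Im z, Re w, Im w of     *)
(* z + w j form an orthonormal system, so the directions below are an  *)
(* orthonormal basis of (H^{m x n}, <,>).                              *)
Section Calculus.
Variables (R : realType) (m n : nat).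
Local Notation HM := (hmat R m n).

Definition hadd (P Q : HM) : HM := (P.1 + Q.1, P.2 + Q.2).
Definition hscale (t : R) (P : HM) : HM := (t%:C *: P.1, t%:C *: P.2).

Definition hdir (a : 'I_m) (b : 'I_n) (k : 'I_4) : HM :=
  match val k with
  | 0 => (delta_mx a b, 0)
  | 1 => ('i%C *: delta_mx a b, 0)
  | 2 => (0, delta_mx a b)
  | _ => (0, 'i%C *: delta_mx a b)
  end.

Definition hline (f : HM -> R[i]) (Q E : HM) (t : R) : R[i] :=
  f (hadd Q (hscale t E)).

Definition hpartial (f : HM -> R[i]) (E : HM) (Q : HM) : R[i] :=
  (derive1 (fun t => complex.Re (hline f Q E t)) 0)%:C
  + 'i%C * (derive1 (fun t => complex.Im (hline f Q E t)) 0)%:C.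

Definition hderivable (f : HM -> R[i]) (E Q : HM) : Prop :=
  derivable (fun t => complex.Re (hline f Q E t)) 0 1 /\
  derivable (fun t => complex.Im (hline f Q E t)) 0 1.

Definition twice_partially_derivable (f : HM -> R[i]) (Q : HM) : Prop :=
  forall (a : 'I_m) (b : 'I_n) (k : 'I_4) (a' : 'I_m) (b' : 'I_n) (k' : 'I_4),
    hderivable f (hdir a b k) Q /\
    hderivable (hpartial f (hdir a b k)) (hdir a' b' k') Q.

Definition tau (f : HM -> R[i]) (Q : HM) : R[i] :=
  \sum_(a < m) \sum_(b < n) \sum_(k < 4)
     hpartial (hpartial f (hdir a b k)) (hdir a b k) Q.

Definition kappa (f g : HM -> R[i]) (Q : HM) : R[i] :=
  \sum_(a < m) \sum_(b < n) \sum_(k < 4)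
     hpartial f (hdir a b k) Q * hpartial g (hdir a b k) Q.

Definition orthogonal_harmonic_family (I : Type) (Omega : I -> HM -> R[i])
  (D : HM -> Prop) : Prop :=
  forall Q, D Q ->
    (forall i, twice_partially_derivable (Omega i) Q) /\
    (forall i, tau (Omega i) Q = 0) /\
    (forall i j, kappa (Omega i) (Omega j) Q = 0).
End Calculus.

(* Along a line Q + tE, Phi* is (y0 + t y) (M + t X)^-1 with y0 = (U -V), M the
   2p x 2p matrix of Q, and (y, X) the same data for E, which depend R-linearly on E.
   Hence the first partial derivatives of Phi* are C-linear, and the pure second ones
   C-quadratic, in (y, X).  For the four real coordinate directions at an entry of Q,
   the direction i E gives (y, X) multiplied by i (U/V rows), or by -i after swapping
   the Z/W and X/Y rows; a C-quadratic expression changes sign under this, so the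
   sums over an orthonormal basis defining tau and kappa cancel in pairs.
   Invariance: both y0 and M are intertwined with right multiplication by g through
   the complex representation of g, which cancels in y0 M^-1. *)

From mathcomp Require Import all_boot all_algebra.
From mathcomp Require Import all_classical all_reals all_analysis.
From mathcomp.real_closed Require Import complex.
From mathcomp Require Import ring.
Import GRing.Theory Num.Theory.
Import numFieldNormedType.Exports.
Local Open Scope ring_scope.
Local Open Scope complex_scope.

Set Implicit Arguments.
Unset Strict Implicit.
Unset Printing Implicit Defensive.

Section ComplexDerive.
Variable R : realType.
Implicit Types (h g : R -> R[i]) (x : R) (d : R[i]).

Definition is_cderive x h d :=
  is_derive x 1 (fun t => complex.Re (h t)) (complex.Re d) /\
  is_derive x 1 (fun t => complex.Im (h t)) (complex.Im d).

Definition cderivable h x :=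
  derivable (fun t => complex.Re (h t)) x 1 /\
  derivable (fun t => complex.Im (h t)) x 1.

(* In this shape, [hpartial f E Q] is convertible to [cderive (hline f Q E) 0]. *)
Definition cderive h x : R[i] :=
  (derive1 (fun t => complex.Re (h t)) x)%:C
  + 'i * (derive1 (fun t => complex.Im (h t)) x)%:C.

Lemma cderivableP h x : cderivable h x -> is_cderive x h (cderive h x).
Proof.
case=> /derivableP dRe /derivableP dIm.
split; [apply: is_derive_eq dRe _ | apply: is_derive_eq dIm _];
  rewrite /cderive !derive1E /=.
  by rewrite mul0r mul1r subr0 addr0.
by rewrite !mul0r mul1r !add0r.
Qed.

Lemma is_cderive_derivable x h d : is_cderive x h d -> cderivable h x.
Proof. by case=> [[? _] [? _]]. Qed.

Lemma cderiveE x h d : is_cderive x h d -> cderive h x = d.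
Proof.
case=> dRe dIm; rewrite /cderive !derive1E.
rewrite (derive_val (is_derive := dRe)) (derive_val (is_derive := dIm)).
exact/esym/complexE.
Qed.

Lemma near_eq_is_cderive x h g d :
  (\forall t \near x, h t = g t) -> is_cderive x h d -> is_cderive x g d.
Proof.
move=> hg [dRe dIm].
by split; [apply: near_eq_is_derive dRe | apply: near_eq_is_derive dIm];
  apply: filterS hg => t ->.
Qed.

Lemma near_eq_cderivable x h g :
  (\forall t \near x, h t = g t) -> cderivable h x -> cderivable g x.
Proof. by move=> hg /cderivableP/(near_eq_is_cderive hg)/is_cderive_derivable. Qed.

Lemma eq_is_derive (f g : R -> R) x df dg :
  g =1 f -> dg = df -> is_derive x 1 g dg -> is_derive x 1 f df.
Proof. by move=> /funext -> ->. Qed.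

Lemma eq_derivable (f g : R -> R) x :
  g =1 f -> derivable g x 1 -> derivable f x 1.
Proof. by move=> /funext ->. Qed.

Lemma is_cderive_cst x c : is_cderive x (fun => c) 0.
Proof. by split; apply: is_derive_cst. Qed.

Lemma is_cderive_id x : is_cderive x (fun t => t%:C) 1.
Proof. by split; [exact: is_derive_id | exact: is_derive_cst]. Qed.

Lemma is_cderiveD x h g dh dg : is_cderive x h dh -> is_cderive x g dg ->
  is_cderive x (fun t => h t + g t) (dh + dg).
Proof.
case=> hRe hIm [gRe gIm].
split; [apply: eq_is_derive (is_deriveD hRe gRe) | apply: eq_is_derive (is_deriveD hIm gIm)];
  by [move=> t; rewrite fctE; case: (h t) (g t) => ? ? []
     | case: dh dg {hRe hIm gRe gIm} => ? ? []].
Qed.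

Lemma is_cderiveN x h dh : is_cderive x h dh -> is_cderive x (fun t => - h t) (- dh).
Proof.
case=> hRe hIm.
split; [apply: eq_is_derive (is_deriveN hRe) | apply: eq_is_derive (is_deriveN hIm)];
  by [move=> t; rewrite fctE; case: (h t) | case: dh {hRe hIm}].
Qed.

Lemma is_cderiveM x h g dh dg : is_cderive x h dh -> is_cderive x g dg ->
  is_cderive x (fun t => h t * g t) (h x * dg + dh * g x).
Proof.
case=> hRe hIm [gRe gIm].
split; [apply: eq_is_derive (is_deriveB (is_deriveM hRe gRe) (is_deriveM hIm gIm)) |
        apply: eq_is_derive (is_deriveD (is_deriveM hRe gIm) (is_deriveM hIm gRe))];
  try by move=> t; rewrite !fctE; case: (h t) (g t) => ? ? [].
all: rewrite /= /GRing.scale /=.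
all: by case: (h x) (g x) dh dg {hRe hIm gRe gIm} => ? ? [? ?] [? ?] [? ?] /=; ring.
Qed.

Lemma is_cderive_sum (I : Type) (s : seq I) (P : pred I) (F : I -> R -> R[i])
    (dF : I -> R[i]) x :
  (forall i, is_cderive x (F i) (dF i)) ->
  is_cderive x (fun t => \sum_(i <- s | P i) F i t) (\sum_(i <- s | P i) dF i).
Proof.
move=> dFi; elim: s => [|a s IH].
  by under eq_fun do rewrite big_nil; rewrite big_nil; apply: is_cderive_cst.
under eq_fun do rewrite big_cons; rewrite big_cons.
by case: (P a) => //; apply: is_cderiveD.
Qed.

Lemma cderivable_big (I : Type) (s : seq I) (P : pred I) (idx : R[i])
    (op : R[i] -> R[i] -> R[i]) (F : I -> R -> R[i]) x :
  (forall h g, cderivable h x -> cderivable g x ->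
     cderivable (fun t => op (h t) (g t)) x) ->
  (forall i, cderivable (F i) x) ->
  cderivable (fun t => \big[op/idx]_(i <- s | P i) F i t) x.
Proof.
move=> dop dF; elim: s => [|a s IH].
  by under eq_fun do rewrite big_nil; exact: is_cderive_derivable (is_cderive_cst x idx).
under eq_fun do rewrite big_cons.
by case: (P a) => //; apply: dop.
Qed.

Lemma cderivableD x h g :
  cderivable h x -> cderivable g x -> cderivable (fun t => h t + g t) x.
Proof.
by move=> /cderivableP dh /cderivableP dg; apply: is_cderive_derivable (is_cderiveD dh dg).
Qed.

Lemma cderivableM x h g :
  cderivable h x -> cderivable g x -> cderivable (fun t => h t * g t) x.
Proof.
by move=> /cderivableP dh /cderivableP dg; apply: is_cderive_derivable (is_cderiveM dh dg).
Qed.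

Lemma cderivableV x h : h x != 0 -> cderivable h x -> cderivable (fun t => (h t)^-1) x.
Proof.
move=> hx0 [dRe dIm].
set hRe := fun t => complex.Re (h t) in dRe *.
set hIm := fun t => complex.Im (h t) in dIm *.
have n2x0 : (hRe ^+ 2 + hIm ^+ 2) x != 0.
  move: hx0; rewrite !fctE /hRe /hIm; case: (h x) => a b /=; apply: contra.
  by rewrite paddr_eq0 ?sqr_ge0 // !sqrf_eq0 => /andP[/eqP -> /eqP ->]; exact: eqxx.
have dn2V := derivableV n2x0 (derivableD (derivableX dRe) (derivableX dIm)).
split.
- apply: eq_derivable (derivableM dRe dn2V) => t.
  by rewrite !fctE /hRe /hIm; case: (h t).
- apply: eq_derivable (derivableN (derivableM dIm dn2V)) => t.
  by rewrite !fctE /hRe /hIm; case: (h t).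
Qed.

Lemma cderivable_neq0_near x h : cderivable h x -> h x != 0 ->
  \forall t \near x, h t != 0.
Proof.
have cont f : derivable f x 1 -> (f @ x --> f x)%classic.
  by move/derivable1_diffP/differentiable_continuous.
case=> /cont cRe /cont cIm; case hx: (h x) => [a b] hx0.
have [a0|a0] := eqVneq a 0.
- have b0 : b != 0 by apply: contraNneq hx0 => b0; rewrite a0 b0.
  have := cvgr_neq0 _ cIm; rewrite hx => /(_ _ b0).
  by apply: filterS => t; apply: contraNneq => ->.
- have := cvgr_neq0 _ cRe; rewrite hx => /(_ _ a0).
  by apply: filterS => t; apply: contraNneq => ->.
Qed.

End ComplexDerive.

Section MatrixDerive.
Variable R : realType.
Implicit Types x : R.

Definition is_mderive m n x (F : R -> 'M[R[i]]_(m, n)) (D : 'M[R[i]]_(m, n)) :=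
  forall i j, is_cderive x (fun t => F t i j) (D i j).

Definition mderivable m n (F : R -> 'M[R[i]]_(m, n)) x :=
  forall i j, cderivable (fun t => F t i j) x.

Section Sized.
Variables m n : nat.
Implicit Types (F G : R -> 'M[R[i]]_(m, n)) (A B D : 'M[R[i]]_(m, n)).

Lemma is_mderive_derivable x F D : is_mderive x F D -> mderivable F x.
Proof. by move=> dF i j; apply: is_cderive_derivable (dF i j). Qed.

Lemma mderivableP x F :
  mderivable F x -> is_mderive x F (\matrix_(i, j) cderive (fun t => F t i j) x).
Proof. by move=> dF i j; rewrite mxE; apply: cderivableP. Qed.

Lemma is_mderive_unique x F D D' : is_mderive x F D -> is_mderive x F D' -> D = D'.
Proof.
by move=> dF dF'; apply/matrixP => i j; rewrite -(cderiveE (dF i j)) (cderiveE (dF' i j)).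
Qed.

Lemma is_mderive_eq x F D D' : is_mderive x F D -> D = D' -> is_mderive x F D'.
Proof. by move=> dF <-. Qed.

Lemma near_eq_is_mderive x F G D :
  (\forall t \near x, F t = G t) -> is_mderive x F D -> is_mderive x G D.
Proof.
by move=> FG dF i j; apply: near_eq_is_cderive (dF i j); apply: filterS FG => t ->.
Qed.

Lemma is_mderive_cst x A : is_mderive x (fun => A) 0.
Proof. by move=> i j; rewrite mxE; apply: is_cderive_cst. Qed.

Lemma is_mderive_line x A B : is_mderive x (fun t => A + t%:C *: B) B.
Proof.
move=> i j; under eq_fun do rewrite !mxE.
have := is_cderiveD (is_cderive_cst x (A i j))
  (is_cderiveM (is_cderive_id x) (is_cderive_cst x (B i j))).
by rewrite mulr0 add0r mul1r add0r.
Qed.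

Lemma is_mderiveD x F G DF DG : is_mderive x F DF -> is_mderive x G DG ->
  is_mderive x (fun t => F t + G t) (DF + DG).
Proof. by move=> dF dG i j; rewrite mxE; under eq_fun do rewrite mxE; apply: is_cderiveD. Qed.

Lemma is_mderiveN x F DF : is_mderive x F DF -> is_mderive x (fun t => - F t) (- DF).
Proof. by move=> dF i j; rewrite mxE; under eq_fun do rewrite mxE; apply: is_cderiveN. Qed.

Lemma is_mderiveB x F G DF DG : is_mderive x F DF -> is_mderive x G DG ->
  is_mderive x (fun t => F t - G t) (DF - DG).
Proof. by move=> dF dG; apply: is_mderiveD dF (is_mderiveN dG). Qed.

End Sized.

Lemma is_mderiveM m n k x (F : R -> 'M[R[i]]_(m, n)) (G : R -> 'M[R[i]]_(n, k)) DF DG :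
  is_mderive x F DF -> is_mderive x G DG ->
  is_mderive x (fun t => F t *m G t) (F x *m DG + DF *m G x).
Proof.
move=> dF dG i j; under eq_fun do rewrite mxE.
rewrite !mxE -big_split /=.
by apply: is_cderive_sum => l; apply: is_cderiveM.
Qed.

Lemma mderivable_det n x (F : R -> 'M[R[i]]_n) :
  mderivable F x -> cderivable (fun t => \det (F t)) x.
Proof.
move=> dF; apply: cderivable_big => [h g|s]; first exact: cderivableD.
apply: cderivableM; first exact: is_cderive_derivable (is_cderive_cst _ _).
by apply: cderivable_big => [h g|i]; [exact: cderivableM | exact: dF].
Qed.

Lemma mderivable_adj n x (F : R -> 'M[R[i]]_n) :
  mderivable F x -> mderivable (fun t => \adj (F t)) x.
Proof.
move=> dF i j; under eq_fun do rewrite mxE /cofactor.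
apply: cderivableM; first exact: is_cderive_derivable (is_cderive_cst _ _).
apply: (@mderivable_det _ _ (fun t => row' j (col' i (F t)))) => k l.
by under eq_fun do rewrite !mxE; apply: dF.
Qed.

Lemma near_unitmx n x (F : R -> 'M[R[i]]_n) : mderivable F x -> \det (F x) != 0 ->
  \forall t \near x, F t \in unitmx.
Proof.
move=> dF Fx0; apply: filterS (cderivable_neq0_near (mderivable_det dF) Fx0) => t.
by rewrite unitmxE unitfE.
Qed.

Lemma mderivable_invmx n x (F : R -> 'M[R[i]]_n) : mderivable F x -> \det (F x) != 0 ->
  mderivable (fun t => invmx (F t)) x.
Proof.
move=> dF Fx0 i j.
apply: (@near_eq_cderivable _ _ (fun t => (\det (F t))^-1 * \adj (F t) i j)).
  apply: filterS (near_unitmx dF Fx0) => t Ft_unit.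
  by rewrite /invmx Ft_unit [in RHS]mxE.
by apply: cderivableM; [apply: cderivableV Fx0 (mderivable_det dF) | apply: mderivable_adj].
Qed.

(* Knowing only that [invmx \o F] is derivable, its derivative D' is read off from
   differentiating [F t *m invmx (F t) = 1]: [F x *m D' + D *m invmx (F x) = 0]. *)
Lemma is_mderive_invmx n x (F : R -> 'M[R[i]]_n) D :
  is_mderive x F D -> \det (F x) != 0 ->
  is_mderive x (fun t => invmx (F t)) (- (invmx (F x) *m D *m invmx (F x))).
Proof.
move=> dF Fx0.
have dFinv := mderivableP (mderivable_invmx (is_mderive_derivable dF) Fx0).
have Fx_unit : F x \in unitmx by rewrite unitmxE unitfE.
have d1 : is_mderive x (fun t => F t *m invmx (F t)) 0.
  apply: near_eq_is_mderive (is_mderive_cst x 1%:M).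
  by apply: filterS (near_unitmx (is_mderive_derivable dF) Fx0) => t /mulmxV.
have := is_mderive_unique (is_mderiveM dF dFinv) d1.
move/(congr1 (mulmx (invmx (F x)))); rewrite mulmx0 mulmxDr !mulmxA mulVmx // mul1mx.
by move/eqP; rewrite addr_eq0 => /eqP <-.
Qed.

End MatrixDerive.

Section Conjugation.
Variable R : realType.

Lemma conjc_i : conjc ('i : R[i]) = - 'i.
Proof. by apply/eqP; rewrite eq_complex /= oppr0 !eqxx. Qed.

Lemma cconj0 m n : cconj (0 : 'M[R[i]]_(m, n)) = 0.
Proof. exact: map_mx0. Qed.

Lemma cconjD m n (A B : 'M[R[i]]_(m, n)) : cconj (A + B) = cconj A + cconj B.
Proof. exact: map_mxD. Qed.

Lemma cconjB m n (A B : 'M[R[i]]_(m, n)) : cconj (A - B) = cconj A - cconj B.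
Proof. exact: map_mxB. Qed.

Lemma cconjZ m n c (A : 'M[R[i]]_(m, n)) : cconj (c *: A) = conjc c *: cconj A.
Proof. by apply/matrixP => i j; rewrite !mxE rmorphM. Qed.

Lemma cconjM m n k (A : 'M[R[i]]_(m, n)) (B : 'M[R[i]]_(n, k)) :
  cconj (A *m B) = cconj A *m cconj B.
Proof. exact: map_mxM. Qed.

Lemma cconjK m n : involutive (@cconj R m n).
Proof. by move=> A; apply/matrixP => i j; rewrite !mxE conjcK. Qed.

Lemma cconj1 n : cconj (1%:M : 'M[R[i]]_n) = 1%:M.
Proof. exact: map_mx1. Qed.

End Conjugation.

Section Quotient.
Variables (R : realType) (r n : nat).
Implicit Types (y : 'M[R[i]]_(r, n)) (M N X : 'M[R[i]]_n).

Definition dquot y0 N y X := y *m N - y0 *m (N *m X *m N).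

Definition d2quot y0 N y X y' X' :=
  y0 *m (N *m X *m N *m X' *m N + N *m X' *m N *m X *m N)
  - y *m (N *m X' *m N) - y' *m (N *m X *m N).

Let line_at0 m k (A B : 'M[R[i]]_(m, k)) : A + (0 : R)%:C *: B = A.
Proof. by rewrite scale0r addr0. Qed.

Lemma is_mderive_invmx_line M X : \det M != 0 ->
  is_mderive 0 (fun t => invmx (M + t%:C *: X)) (- (invmx M *m X *m invmx M)).
Proof.
by move=> M0; have := is_mderive_invmx (is_mderive_line 0 M X); rewrite line_at0; apply.
Qed.

Lemma is_mderive_quot y0 y M X : \det M != 0 ->
  is_mderive 0 (fun t => (y0 + t%:C *: y) *m invmx (M + t%:C *: X))
    (dquot y0 (invmx M) y X).
Proof.
move=> M0; have := is_mderiveM (is_mderive_line 0 y0 y) (is_mderive_invmx_line X M0).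
by rewrite /dquot !line_at0 mulmxN addrC.
Qed.

Lemma is_mderive_dquot y0 y y' M X X' : \det M != 0 ->
  is_mderive 0 (fun s => dquot (y0 + s%:C *: y') (invmx (M + s%:C *: X')) y X)
    (d2quot y0 (invmx M) y X y' X').
Proof.
move=> M0; set N := invmx M; have dN := is_mderive_invmx_line X' M0.
have dNXN := is_mderiveM (is_mderiveM dN (is_mderive_cst 0 X)) dN.
apply: is_mderive_eq (is_mderiveB (is_mderiveM (is_mderive_cst 0 y) dN)
                                  (is_mderiveM (is_mderive_line 0 y0 y') dNXN)) _.
rewrite /d2quot !line_at0 -/N !mul0mx !mulmx0 add0r addr0.
by rewrite !(mulmxN, mulNmx, mulmxDr, mulmxA, opprD, opprK) addrC addrAC.
Qed.

Lemma dquotZ c y0 N y X : dquot y0 N (c *: y) (c *: X) = c *: dquot y0 N y X.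
Proof. by rewrite /dquot !(=^~ scalemxAl, =^~ scalemxAr) scalerBr. Qed.

Lemma d2quotZ c y0 N y X :
  d2quot y0 N (c *: y) (c *: X) (c *: y) (c *: X) = c ^+ 2 *: d2quot y0 N y X y X.
Proof.
rewrite /d2quot !mulmxDr !(=^~ scalemxAl, =^~ scalemxAr, scalerA) -expr2.
by rewrite !scalerBr scalerDr.
Qed.

End Quotient.

Lemma hpartial_is_cderive (R : realType) m n (f : hmat R m n -> R[i]) Q E d :
  is_cderive 0 (hline f Q E) d -> hderivable f E Q /\ hpartial f E Q = d.
Proof. by move=> df; split; [exact: is_cderive_derivable df | exact: cderiveE df]. Qed.

Section PhistarDerive.
Variables (R : realType) (p r : nat).
Local Notation HM := (hmat R (p + (p + r)) p).
Implicit Types Q E : HM.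

Definition UVrow Q : 'M[R[i]]_(r, p + p) := row_mx (blkU Q) (- blkV Q).

Lemma Mstar_line Q E t : Mstar (hadd Q (hscale t E)) = Mstar Q + t%:C *: Mstar E.
Proof.
rewrite /Mstar /blkZ /blkX /blkY /blkW /hadd /hscale /= !linearD !linearZ /=.
rewrite !cconjD !cconjZ conjc_real scale_block_mx add_block_mx.
by congr block_mx; rewrite ?scalerN ?scalerBr ?scalerDr addrACA.
Qed.

Lemma UVrow_line Q E t : UVrow (hadd Q (hscale t E)) = UVrow Q + t%:C *: UVrow E.
Proof.
rewrite /UVrow /blkU /blkV /hadd /hscale /= !linearD !linearZ /=.
by rewrite scale_row_mx add_row_mx scalerN.
Qed.

Lemma Phistar_line Q E t : Phistar (hadd Q (hscale t E)) =
  (UVrow Q + t%:C *: UVrow E) *m invmx (Mstar Q + t%:C *: Mstar E).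
Proof. by rewrite -Mstar_line -UVrow_line. Qed.

Lemma hpartial_Phistar Q E a b : \det (Mstar Q) != 0 ->
  hderivable (fun Q => Phistar Q a b) E Q /\
  hpartial (fun Q => Phistar Q a b) E Q =
    dquot (UVrow Q) (invmx (Mstar Q)) (UVrow E) (Mstar E) a b.
Proof.
move=> MQ0; apply: hpartial_is_cderive; rewrite /hline.
under eq_fun do rewrite Phistar_line.
exact: is_mderive_quot.
Qed.

Lemma near_det_Mstar_line Q E : \det (Mstar Q) != 0 ->
  \forall s \near 0, \det (Mstar (hadd Q (hscale s E))) != 0.
Proof.
move=> MQ0.
have := mderivable_det (is_mderive_derivable (is_mderive_line 0 (Mstar Q) (Mstar E))).
move/cderivable_neq0_near; rewrite scale0r addr0 => /(_ MQ0).
by apply: filterS => s; rewrite Mstar_line.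
Qed.

Lemma hpartial2_Phistar Q E E' a b : \det (Mstar Q) != 0 ->
  hderivable (hpartial (fun Q => Phistar Q a b) E) E' Q /\
  hpartial (hpartial (fun Q => Phistar Q a b) E) E' Q =
    d2quot (UVrow Q) (invmx (Mstar Q)) (UVrow E) (Mstar E) (UVrow E') (Mstar E') a b.
Proof.
move=> MQ0; apply: hpartial_is_cderive.
apply: near_eq_is_cderive (is_mderive_dquot _ _ _ _ _ MQ0 a b).
apply: filterS (near_det_Mstar_line E' MQ0) => s MQs0.
by rewrite /hline (hpartial_Phistar E a b MQs0).2 Mstar_line UVrow_line.
Qed.

End PhistarDerive.

Section HmatDirections.
Variable R : realType.

Definition hcscale m n (c : R[i]) (E : hmat R m n) : hmat R m n := (c *: E.1, c *: E.2).

Definition hmap m m' n (f : 'M[R[i]]_(m, n) -> 'M[R[i]]_(m', n)) (E : hmat R m n) :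
  hmat R m' n := (f E.1, f E.2).

Lemma sum_hdir (V : zmodType) m n (G : hmat R m n -> V) a b :
  \sum_(k < 4) G (hdir R a b k) =
  G (delta_mx a b, 0) + G (hcscale 'i (delta_mx a b, 0))
  + (G (0, delta_mx a b) + G (hcscale 'i (0, delta_mx a b))).
Proof. by rewrite !big_ord_recl big_ord0 /hdir /hcscale /= !scaler0 addr0 !addrA. Qed.

Lemma hdir_hmap m m' n (f : 'M[R[i]]_(m, n) -> 'M[R[i]]_(m', n)) a a' b k :
  (forall c A, f (c *: A) = c *: f A) -> f (delta_mx a b) = delta_mx a' b ->
  hdir R a' b k = hmap f (hdir R a b k).
Proof.
move=> fZ fab; have f0 : f 0 = 0 by rewrite -(scale0r 0) fZ scale0r.
by rewrite /hdir /hmap; case: k => [[|[|[|k]]] ?] /=; rewrite ?fZ fab f0.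
Qed.

End HmatDirections.

Section Isotropy.
Variables (R : realType) (p r : nat).
Local Notation HM := (hmat R (p + (p + r)) p).

Definition htop : hmat R p p -> HM := hmap (fun A => col_mx A 0).
Definition hmid : hmat R p p -> HM := hmap (fun A => col_mx 0 (col_mx A 0)).
Definition hbot : hmat R r p -> HM := hmap (fun A => col_mx 0 (col_mx 0 A)).

Lemma UVrow_htop A : UVrow (htop A) = 0.
Proof. by rewrite /UVrow /blkU /blkV /= !col_mxKd ?linear0 ?oppr0 row_mx0. Qed.

Lemma UVrow_hmid A : UVrow (hmid A) = 0.
Proof. by rewrite /UVrow /blkU /blkV /= !col_mxKd ?linear0 ?oppr0 row_mx0. Qed.

Lemma UVrow_hbot_scale c A : UVrow (hbot (hcscale c A)) = c *: UVrow (hbot A).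
Proof. by rewrite /UVrow /blkU /blkV /= !col_mxKd scale_row_mx scalerN. Qed.

Lemma Mstar_hbot A : Mstar (hbot A) = 0.
Proof.
by rewrite /Mstar /blkZ /blkW /blkX /blkY /= !col_mxKu !col_mxKd !col_mxKu
  !cconj0 !subrr addr0 block_mx0.
Qed.

Lemma Mstar_htop_scale_i A : Mstar (htop (hcscale 'i A)) = - 'i *: Mstar (hmid A).
Proof.
rewrite /Mstar /blkZ /blkW /blkX /blkY /= !col_mxKu !col_mxKd !col_mxKu !linear0.
rewrite !cconj0 !cconjZ conjc_i scale_block_mx ?subr0 ?sub0r ?addr0 ?add0r.
by congr block_mx; rewrite ?scaleNr ?scalerN ?opprK.
Qed.

Lemma Mstar_hmid_scale_i A : Mstar (hmid (hcscale 'i A)) = - 'i *: Mstar (htop A).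
Proof.
rewrite /Mstar /blkZ /blkW /blkX /blkY /= !col_mxKu !col_mxKd !col_mxKu !linear0.
rewrite !cconj0 !cconjZ conjc_i scale_block_mx ?subr0 ?sub0r ?addr0 ?add0r.
by congr block_mx; rewrite ?scaleNr ?scalerN ?opprK.
Qed.

Variable F : 'M[R[i]]_(r, p + p) -> 'M[R[i]]_(p + p) -> R[i].
Hypothesis FZ : forall c y X, F (c *: y) (c *: X) = c ^+ 2 * F y X.
Local Notation G E := (F (UVrow E) (Mstar E)).

Lemma F0Z c X : F 0 (c *: X) = c ^+ 2 * F 0 X.
Proof. by rewrite -FZ scaler0. Qed.

Lemma FZ0 c y : F (c *: y) 0 = c ^+ 2 * F y 0.
Proof. by rewrite -FZ scaler0. Qed.

Lemma htop_hmid_cancel A :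
  G (htop A) + G (htop (hcscale 'i A)) + (G (hmid A) + G (hmid (hcscale 'i A))) = 0.
Proof.
by rewrite !UVrow_htop !UVrow_hmid Mstar_htop_scale_i Mstar_hmid_scale_i !F0Z sqrrN sqr_i; ring.
Qed.

Lemma hbot_cancel A : G (hbot A) + G (hbot (hcscale 'i A)) = 0.
Proof. by rewrite UVrow_hbot_scale !Mstar_hbot FZ0 sqr_i mulN1r subrr. Qed.

Lemma sum_hdir_UVrow_Mstar :
  \sum_(a < p + (p + r)) \sum_(b < p) \sum_(k < 4) G (hdir R a b k) = 0.
Proof.
have top i b k : hdir R (lshift (p + r) i) b k = htop (hdir R i b k).
  by apply: hdir_hmap => [c A|]; rewrite ?scale_col_mx ?scaler0 ?delta_mx_ushift.
have mid i b k : hdir R (rshift p (lshift r i)) b k = hmid (hdir R i b k).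
  by apply: hdir_hmap => [c A|];
    rewrite ?scale_col_mx ?scaler0 ?delta_mx_dshift ?delta_mx_ushift.
have bot i b k : hdir R (rshift p (rshift p i)) b k = hbot (hdir R i b k).
  by apply: hdir_hmap => [c A|]; rewrite ?scale_col_mx ?scaler0 ?delta_mx_dshift.
rewrite !big_split_ord /= addrA -big_split /= big1 => [|i _].
  rewrite add0r big1 // => i _; apply: big1 => b _.
  under eq_bigr do rewrite bot.
  by rewrite (sum_hdir (fun E => G (hbot E))) hbot_cancel add0r hbot_cancel.
rewrite -big_split /= big1 // => b _.
under [X in X + _]eq_bigr do rewrite top.
under [X in _ + X]eq_bigr do rewrite mid.
rewrite (sum_hdir (fun E => G (htop E))) (sum_hdir (fun E => G (hmid E))) addrACA.
exact: etrans (congr2 +%R (htop_hmid_cancel _) (htop_hmid_cancel _)) (addr0 0).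
Qed.

End Isotropy.

Section Invariance.
Variables (R : realType) (p r : nat).
Local Notation HM := (hmat R (p + (p + r)) p).

Definition hrepr (g : hmat R p p) : 'M[R[i]]_(p + p) :=
  block_mx g.1 (- g.2) (cconj g.2) (cconj g.1).

Lemma Mstar_hmul (Q : HM) g : Mstar (hmul Q g) = Mstar Q *m hrepr g.
Proof.
rewrite /Mstar /hrepr /blkZ /blkX /blkY /blkW /hmul /= mulmx_block.
rewrite !(linearB, linearD) /= -!(mul_usub_mx, mul_dsub_mx).
rewrite !(cconjB, cconjD, cconjM, cconjK).
rewrite !(mulmxBl, mulmxDl, mulmxN).
congr block_mx.
- by rewrite opprK [LHS](AC (2*2) ((1*3)*(4*2))).
- by rewrite opprK [LHS](AC (2*2) ((3*1)*(2*4))).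
- by rewrite [LHS](AC (2*2) ((2*4)*(3*1))).
- by rewrite [LHS](AC (2*2) ((4*2)*(1*3))).
Qed.

Lemma UVrow_hmul (Q : HM) g : UVrow (hmul Q g) = UVrow Q *m hrepr g.
Proof.
rewrite /UVrow /hrepr /blkU /blkV /hmul /= mul_row_block.
rewrite !(linearB, linearD) /= -!(mul_usub_mx, mul_dsub_mx).
by rewrite !(mulmxN, mulNmx, opprD) ?opprK.
Qed.

Lemma hrepr_hmul g h : hrepr (hmul g h) = hrepr g *m hrepr h.
Proof.
rewrite /hrepr /hmul /= mulmx_block !(cconjB, cconjD, cconjM, cconjK).
by rewrite !(mulmxN, mulNmx, opprD, opprK); congr block_mx; rewrite addrC.
Qed.

Lemma hrepr_hone : hrepr (hone R p) = 1%:M.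
Proof. by rewrite /hrepr /= oppr0 cconj0 cconj1 -scalar_mx_block. Qed.

Lemma hrepr_unitmx g : hinvertible g -> hrepr g \in unitmx.
Proof.
case=> h [gh _]; have := hrepr_hmul g h.
by rewrite gh hrepr_hone => /esym/mulmx1_unit[].
Qed.

Lemma Phistar_hmul (Q : HM) g : \det (Mstar Q) != 0 -> hinvertible g ->
  Phistar (hmul Q g) = Phistar Q.
Proof.
move=> MQ0 /hrepr_unitmx g_unit.
have MQ_unit : Mstar Q \in unitmx by rewrite unitmxE unitfE.
have MQg_unit : Mstar Q *m hrepr g \in unitmx by rewrite unitmx_mul MQ_unit.
rewrite /Phistar -/(UVrow _) -/(UVrow _) UVrow_hmul Mstar_hmul.
by rewrite -[in LHS](mulmxKV MQ_unit (UVrow Q)) -(mulmxA _ (Mstar Q)) mulmxK.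
Qed.

End Invariance.

Theorem proposition10p1 (R : realType) (p r : nat) (hp : (0 < p)%N) (hr : (0 < r)%N) :
  (* GL_p(H)-invariance of Phi* on V*_{pq}(H), q = p + r *)
  (forall (Q : hmat R (p + (p + r)) p) (g : hmat R p p),
      in_Vstar Q -> hinvertible g ->
      Phistar (hmul Q g) = Phistar Q) /\
  (* the components Phi*_{ab} form an orthogonal harmonic family on V* *)
  orthogonal_harmonic_family
    (fun ab : 'I_r * 'I_(p + p) =>
       fun Q : hmat R (p + (p + r)) p => Phistar Q ab.1 ab.2)
    (@in_Vstar R p r).
Proof.
split=> [Q g [_ MQ0]|Q [_ MQ0]]; first exact: Phistar_hmul.
pose y0 := UVrow Q; pose N := invmx (Mstar Q).
split; [|split].
- move=> [a b] a1 b1 k a2 b2 k2.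
  by split; [case: (hpartial_Phistar (hdir R a1 b1 k) a b MQ0)
            | case: (hpartial2_Phistar (hdir R a1 b1 k) (hdir R a2 b2 k2) a b MQ0)].
- move=> [a b]; pose F y X := d2quot y0 N y X y X a b.
  have FZ c y X : F (c *: y) (c *: X) = c ^+ 2 * F y X by rewrite /F d2quotZ mxE.
  apply: eq_trans (sum_hdir_UVrow_Mstar FZ).
  apply: eq_bigr => a1 _; apply: eq_bigr => b1 _; apply: eq_bigr => k _.
  exact: (hpartial2_Phistar _ _ a b MQ0).2.
- move=> [a b] [a' b']; pose F y X := dquot y0 N y X a b * dquot y0 N y X a' b'.
  have FZ c y X : F (c *: y) (c *: X) = c ^+ 2 * F y X.
    by rewrite /F !dquotZ !mxE mulrACA -expr2.
  apply: eq_trans (sum_hdir_UVrow_Mstar FZ).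
  apply: eq_bigr => a1 _; apply: eq_bigr => b1 _; apply: eq_bigr => k _.
  by rewrite !(hpartial_Phistar _ _ _ MQ0).2.
Qed.
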